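(* Let $A\in\mathbb{R}^{n\times d}$, $k\ge1$, $0<\epsilon\le1$ with $10/\epsilon$ an integer, and $t=10/\epsilon+1$. Let $\{0\}=P_0\subseteq P_1\subseteq\cdots\subseteq P_t$ be linear subspaces of $\mathbb{R}^d$ such that for every $i\in[t]$, $$\|A(I-\mathbb{P}_{P_i})\|_{1,2}\le(1+\epsilon)\,\mathrm{SubApx}_{k,1}(A(I-\mathbb{P}_{P_{i-1}})).$$ Then for at least $9/\epsilon$ indices $j\in\{1,\dots,10/\epsilon\}$ the following holds: for every linear subspace $W$ of dimension at most $k$, $$\|A(I-\mathbb{P}_{P_j})\|_{1,2}-\|A(I-\mathbb{P}_{P_j+W})\|_{1,2}\le4\epsilon\,\mathrm{SubApx}_{k,1}(A).$$
   Context: $\|M\|_{1,2}=\sum_i\|M_{i*}\|_2$. $\mathbb{P}_Q$ is the orthogonal projection matrix onto subspace $Q$; $P_j+W$ is the span of $P_j\cup W$. For $M$ with rows in $\mathbb{R}^d$, $\mathrm{SubApx}_{k,1}(M)=\min\{\sum_i\mathrm{dist}(M_{i*},Q):Q\text{ linear subspace},\dim Q\le k\}$. *)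

(* real numbers modelled by an arbitrary real closed field R. *)
From HB Require Import structures.
From mathcomp Require Import all_boot all_order all_algebra.
Set Implicit Arguments. Unset Strict Implicit. Unset Printing Implicit Defensive.
Import Order.TTheory GRing.Theory Num.Theory.
Local Open Scope ring_scope.

(* A linear subspace of R^d is represented (mxalgebra style) by the row space
   of a matrix Q : 'M[R]_d ; its dimension is \rank Q. *)

Definition norm2 (R : rcfType) (d : nat) (v : 'rV[R]_d) : R :=
  Num.sqrt (\sum_(j < d) v 0 j ^+ 2).

Definition norm12 (R : rcfType) (n d : nat) (M : 'M[R]_(n, d)) : R :=
  \sum_(i < n) norm2 (row i M).

Definition projmx (R : rcfType) (d : nat) (Q : 'M[R]_d) : 'M[R]_d :=
  let B := row_base Q in (B^T *m invmx (B *m B^T) *m B).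

(* sum_i dist(M_i, Q) = ||M (I - P_Q)||_{1,2} *)
Definition subcost (R : rcfType) (n d : nat) (M : 'M[R]_(n, d)) (Q : 'M[R]_d) : R :=
  norm12 (M *m (1%:M - projmx Q)).

(* "y <= c * SubApx_{k,1}(M)", where SubApx_{k,1}(M) is the minimum of
   subcost M Q over subspaces Q with dim Q <= k.  Stated as: y <= c * cost(Q)
   for every admissible Q (equivalent since the minimum is attained, and
   the literal reading of "<= c * inf" in general). *)
Definition le_SubApx (R : rcfType) (n d : nat) (k : nat) (y c : R)
  (M : 'M[R]_(n, d)) : Prop :=
  forall Q : 'M[R]_d, (\rank Q <= k)%N -> y <= c * subcost M Q.

(* Write F j for the cost of A after projecting away P_j.  F is nonincreasing,
   and F 1 <= (1 + eps) OPT where OPT = SubApx_{k,1}(A).  If some W of dimension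
   at most k improves F j by more than 4 eps OPT, then the projection of W
   orthogonal to P_j is a k-dimensional competitor for step j + 1, and
   comparing the hypothesis at step j + 1 with this competitor shows
   F (j + 1) < F j - 3 eps F 1.  Since F telescopes from F 1 down to a
   nonnegative value, fewer than 1 / (3 eps) indices can be bad, which leaves
   at least 10 / eps - 1 / (3 eps) >= 9 / eps good ones. *)
From mathcomp Require Import lra zify.
From HB Require Import structures.
From mathcomp Require Import all_boot all_order all_algebra.
From mathcomp Require Import boolp.
Set Implicit Arguments. Unset Strict Implicit. Unset Printing Implicit Defensive.
Import Order.TTheory GRing.Theory Num.Theory.
Local Open Scope ring_scope.

Section OrthogonalProjection.
Variables (R : rcfType) (d : nat).
Implicit Types (u v : 'rV[R]_d) (Q : 'M[R]_d).

Definition sqnorm u : R := (u *m u^T) 0 0.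

Lemma sqnormE u : sqnorm u = \sum_(j < d) u 0 j ^+ 2.
Proof. by rewrite /sqnorm mxE; apply: eq_bigr => j _; rewrite mxE expr2. Qed.

Lemma norm2E u : norm2 u = Num.sqrt (sqnorm u).
Proof. by rewrite sqnormE. Qed.

Lemma sqnorm_ge0 u : 0 <= sqnorm u.
Proof. by rewrite sqnormE sumr_ge0 // => j _; rewrite sqr_ge0. Qed.

Lemma sqnorm_eq0 u : sqnorm u = 0 -> u = 0.
Proof.
rewrite sqnormE => /eqP; rewrite psumr_eq0; last by move=> j _; rewrite sqr_ge0.
move=> /allP u_eq0; apply/matrixP => i j; rewrite ord1 mxE.
by have := u_eq0 j (mem_index_enum _); rewrite sqrf_eq0 => /eqP.
Qed.

Lemma sqnormD_orth u v : u *m v^T = 0 -> sqnorm (u + v) = sqnorm u + sqnorm v.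
Proof.
move=> uv0; rewrite /sqnorm linearD /= mulmxDl !mulmxDr uv0.
have -> : v *m u^T = 0 by rewrite -(trmxK v) -trmx_mul uv0 linear0.
by rewrite addr0 add0r !mxE.
Qed.

Lemma row_free_mulmx_tr_unit m (B : 'M[R]_(m, d)) :
  row_free B -> B *m B^T \in unitmx.
Proof.
move=> freeB; rewrite -row_free_unit -kermx_eq0 -submx0.
apply/row_subP => i; set w := row i _.
have wBBt0 : w *m (B *m B^T) = 0 by apply/sub_kermxP; rewrite row_sub.
have wB0 : sqnorm (w *m B) = 0.
  by rewrite /sqnorm trmx_mul mulmxA -(mulmxA w) wBBt0 mul0mx mxE.
have := sqnorm_eq0 wB0; rewrite -(mul0mx _ B) => /(row_free_inj freeB) ->.
by rewrite sub0mx.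
Qed.

Lemma projmx_sub m (X : 'M[R]_(m, d)) Q : (X *m projmx Q <= Q)%MS.
Proof.
rewrite /projmx mulmxA; apply: submx_trans (submxMl _ _) _.
by rewrite eq_row_base.
Qed.

Lemma projmx_id m (X : 'M[R]_(m, d)) Q : (X <= Q)%MS -> X *m projmx Q = X.
Proof.
rewrite -(eq_row_base Q) => /submxP [D ->].
have := row_free_mulmx_tr_unit (row_base_free Q).
rewrite /projmx; move: (row_base Q) => B BBt_unit.
by rewrite -!mulmxA (mulmxA B) (mulmxA (B *m B^T)) (mulmxV BBt_unit) mul1mx.
Qed.

Lemma trmx_projmx Q : (projmx Q)^T = projmx Q.
Proof.
rewrite /projmx; move: (row_base Q) => B.
by rewrite !trmx_mul trmx_inv trmx_mul !trmxK mulmxA.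
Qed.

Lemma projmx0 : projmx (0 : 'M[R]_d) = 0.
Proof. by apply/eqP; rewrite -submx0 -[projmx 0]mul1mx projmx_sub. Qed.

Lemma residual_orth u v Q : (v <= Q)%MS -> (u - u *m projmx Q) *m v^T = 0.
Proof.
move=> vQ; rewrite mulmxBl -mulmxA.
by rewrite -trmx_projmx -trmx_mul (projmx_id vQ) subrr.
Qed.

Lemma norm2_residual_le u Q v : (v <= Q)%MS ->
  norm2 (u *m (1%:M - projmx Q)) <= norm2 (u - v).
Proof.
move=> vQ; rewrite !norm2E ler_sqrt ?sqnorm_ge0 // mulmxBr mulmx1.
have -> : u - v = (u - u *m projmx Q) + (u *m projmx Q - v) by rewrite addrA subrK.
rewrite sqnormD_orth ?lerDl ?sqnorm_ge0 //.
by apply: residual_orth; rewrite addmx_sub ?projmx_sub // eqmx_opp.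
Qed.

Lemma norm12_ge0 n m (M : 'M[R]_(n, m)) : 0 <= norm12 M.
Proof. by rewrite sumr_ge0 // => i _; rewrite sqrtr_ge0. Qed.

Lemma subcost_antimono n (M : 'M[R]_(n, d)) Q1 Q2 : (Q1 <= Q2)%MS ->
  subcost M Q2 <= subcost M Q1.
Proof.
move=> sQ12; apply: ler_sum => i _; rewrite !row_mul.
apply: le_trans (norm2_residual_le _ (submx_trans (projmx_sub _ Q1) sQ12)) _.
by rewrite mulmxBr mulmx1.
Qed.

Lemma subcost_residual_le n (M : 'M[R]_(n, d)) P W :
  subcost (M *m (1%:M - projmx P)) (W *m (1%:M - projmx P)) <= subcost M (P + W)%MS.
Proof.
apply: ler_sum => i _; rewrite !row_mul; set v := row i M.
have /sub_addsmxP [[u1 u2] /= proj_vPW] := projmx_sub v (P + W)%MS.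
set w := u2 *m (W *m (1%:M - projmx P)).
apply: le_trans (norm2_residual_le _ (submxMl u2 _ : (w <= _)%MS)) _.
have -> : v *m (1%:M - projmx P) - w = (v - v *m projmx (P + W)%MS) *m (1%:M - projmx P).
  rewrite mulmxBl proj_vPW mulmxDl.
  have -> : u1 *m P *m (1%:M - projmx P) = 0.
    by rewrite mulmxBr mulmx1 projmx_id ?submxMl // subrr.
  by rewrite add0r /w mulmxA.
apply: le_trans (norm2_residual_le _ (sub0mx 1 P)) _.
by rewrite subr0 mulmxBr mulmx1.
Qed.

End OrthogonalProjection.

Lemma count_large_drops (R : realFieldType) (F : nat -> R) (m : nat)
    (delta : R) (p : pred nat) :
  (forall i j, (1 <= i <= j)%N -> (j <= m.+1)%N -> F j <= F i) ->
  0 <= F m.+1 ->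
  (forall j, (1 <= j <= m)%N -> p j -> delta * F 1%N < F j - F j.+1) ->
  (count p (iota 1 m))%:R * delta <= 1.
Proof.
move=> F_antimono F_ge0 drop.
have [F1_gt0|F1_le0] := ltrP 0 (F 1%N); last first.
  have -> : count p (iota 1 m) = 0%N.
    apply/eqP; rewrite -leqn0 leqNgt -has_count; apply/hasP => -[j].
    rewrite mem_iota => jm pj.
    have Fm_le_F1 := F_antimono 1%N m.+1 isT ltac:(lia).
    have F1_eq0 : F 1%N = 0 by lra.
    have := drop j ltac:(lia) pj; rewrite F1_eq0 mulr0.
    have := F_antimono 1%N j ltac:(lia) ltac:(lia).
    have := F_antimono j.+1 m.+1 ltac:(lia) ltac:(lia).
    lra.
  by rewrite mul0r ler01.
have sum_drops : \sum_(j <- iota 1 m) (F j - F j.+1) = F 1%N - F m.+1.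
  have -> : iota 1 m = index_iota 1 m.+1 by rewrite /index_iota subn1.
  rewrite (telescope_sumr_eq (fun j => - F j)) ?opprK 1?addrC //.
  by move=> j _; rewrite opprK addrC.
have : (count p (iota 1 m))%:R * (delta * F 1%N) <= F 1%N - F m.+1.
  rewrite -sum_drops -sum1_count natr_sum mulr_suml big_mkcond /=.
  rewrite big_seq [leRHS]big_seq; apply: ler_sum => j; rewrite mem_iota => jm.
  case: ifP => pj; first by rewrite mul1r ltW // drop //; lia.
  by rewrite subr_ge0 F_antimono //; lia.
rewrite mulrA => bound; rewrite -(ler_pM2r F1_gt0) mul1r; lra.
Qed.

Section NestedRefinement.
Variables (R : rcfType) (n d k : nat) (A : 'M[R]_(n, d)) (eps : R) (m : nat).
Variable P : nat -> 'M[R]_d.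
Hypotheses (eps_gt0 : 0 < eps) (P0 : P 0%N = 0).
Hypothesis P_nested : forall i, (i < m.+1)%N -> (P i <= P i.+1)%MS.
Hypothesis P_near_opt : forall i, (1 <= i <= m.+1)%N ->
  le_SubApx k (norm12 (A *m (1%:M - projmx (P i)))) (1 + eps)
    (A *m (1%:M - projmx (P i.-1))).

Definition good_index j := forall W : 'M[R]_d, (\rank W <= k)%N ->
  le_SubApx k (subcost A (P j) - subcost A (P j + W)%MS) (4 * eps) A.

Lemma subcost_P_antimono i j : (i <= j <= m.+1)%N ->
  subcost A (P j) <= subcost A (P i).
Proof.
move=> /andP [+ jm]; elim: j jm => [|j IH] jm; first by rewrite leqn0 => /eqP ->.
rewrite leq_eqVlt ltnS => /orP [/eqP -> //|ij].
apply: le_trans (subcost_antimono _ (P_nested jm)) (IH (ltnW jm) ij).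
Qed.

Lemma subcost_P1_le Q : (\rank Q <= k)%N ->
  subcost A (P 1%N) <= (1 + eps) * subcost A Q.
Proof.
by move=> rQ; have := P_near_opt (isT : (1 <= 1 <= m.+1)%N) rQ; rewrite P0 projmx0 subr0 mulmx1.
Qed.

Lemma subcost_P_succ_le j (W : 'M[R]_d) : (1 <= j <= m)%N -> (\rank W <= k)%N ->
  subcost A (P j.+1) <= (1 + eps) * subcost A (P j + W)%MS.
Proof.
move=> jm rW.
have rW' : (\rank (W *m (1%:M - projmx (P j))) <= k)%N.
  exact: leq_trans (mxrankM_maxl _ _) rW.
have jm' : (1 <= j.+1 <= m.+1)%N by lia.
apply: le_trans (P_near_opt jm' rW') _.
by rewrite ler_pM2l ?subcost_residual_le ?addr_gt0.
Qed.

Lemma large_drop_of_bad_index j : (1 <= j <= m)%N -> ~ good_index j ->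
  3 * eps * subcost A (P 1%N) < subcost A (P j) - subcost A (P j.+1).
Proof.
move=> jm /existsNP [W /not_implyP [rW /existsNP [Q /not_implyP [rQ /negP]]]].
rewrite -ltNge => improves.
have eps1_gt0 : 0 < 1 + eps by rewrite addr_gt0.
have step := subcost_P_succ_le jm rW.
have {}improves : (1 + eps) * subcost A (P j + W)%MS
    < (1 + eps) * (subcost A (P j) - 4 * eps * subcost A Q).
  by rewrite ltr_pM2l // ltrBrDr addrC -ltrBrDr.
have first_step : 4 * eps * subcost A (P 1%N) <= 4 * eps * ((1 + eps) * subcost A Q).
  by rewrite ler_pM2l ?subcost_P1_le ?mulr_gt0.
have Pj_le_P1 : eps * subcost A (P j) <= eps * subcost A (P 1%N).
  by rewrite ler_pM2l // subcost_P_antimono //; lia.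
lra.
Qed.

End NestedRefinement.

Theorem mainTheorem11 (R : rcfType) (n d k : nat) (A : 'M[R]_(n, d))
  (eps : R) (m : nat) (P : nat -> 'M[R]_d) :
  (1 <= k)%N ->
  0 < eps -> eps <= 1 ->
  10 / eps = m%:R ->
  P 0%N = 0 ->
  (forall i, (i < m.+1)%N -> (P i <= P i.+1)%MS) ->
  (forall i, (1 <= i <= m.+1)%N ->
     le_SubApx k (norm12 (A *m (1%:M - projmx (P i)))) (1 + eps)
       (A *m (1%:M - projmx (P i.-1)))) ->
  exists S : seq nat,
    [/\ uniq S, all (fun j => (1 <= j <= m)%N) S,
        9 / eps <= (size S)%:R &
        forall j, j \in S ->
          forall W : 'M[R]_d, (\rank W <= k)%N ->
            le_SubApx k (norm12 (A *m (1%:M - projmx (P j)))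
                         - norm12 (A *m (1%:M - projmx (P j + W)%MS)))
              (4 * eps) A].
Proof.
move=> _ eps_gt0 _ m_eq P0 P_nested P_near_opt.
pose good j := `[< good_index k A eps P j >].
exists [seq j <- iota 1 m | good j]; split.
- by rewrite filter_uniq ?iota_uniq.
- by apply/allP => j; rewrite mem_filter mem_iota => /andP [_ ?]; lia.
- have bad_few : (count (predC good) (iota 1 m))%:R * (3 * eps) <= 1.
    apply: (count_large_drops (F := fun j => subcost A (P j))).
    + by move=> i j /andP [_ ij] jm; apply: (subcost_P_antimono _ P_nested); lia.
    + exact: norm12_ge0.
    + by move=> j jm /asboolPn; apply: (large_drop_of_bad_index eps_gt0 P0 P_nested P_near_opt).
  have := count_predC good (iota 1 m); rewrite size_iota size_filter.
  move=> /(congr1 (GRing.natmul (1 : R))); rewrite natrD -m_eq => split_m.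
  have {}split_m : (count good (iota 1 m))%:R * eps
      + (count (predC good) (iota 1 m))%:R * eps = 10.
    by rewrite -mulrDl split_m divfK ?gt_eqF.
  rewrite ler_pdivrMr //; lra.
- by move=> j; rewrite mem_filter => /andP [/asboolP].
Qed.
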